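(* Let $(X,T)$ be a topological dynamical system and $\mu$ a $T$-invariant Borel probability measure on $X$. Then $\mu$ has bounded complexity with respect to $\{d_n\}$ if and only if $T$ is $\mu$-equicontinuous.
   Context: A t.d.s. $(X,T)$ consists of a compact metric space $(X,d)$ and a continuous map $T\colon X\to X$. $d_n(x,y)=\max\{d(T^ix,T^iy)\colon 0\le i\le n-1\}$, $B_{d_n}(x,\varepsilon)=\{y\colon d_n(x,y)<\varepsilon\}$. For an invariant measure $\mu$, $\mathrm{span}_\mu(n,\varepsilon)=\min\{\#(F)\colon F\subset X,\ \mu(\bigcup_{x\in F}B_{d_n}(x,\varepsilon))>1-\varepsilon\}$; $\mu$ has bounded complexity with respect to $\{d_n\}$ if for every $\varepsilon>0$ there is a positive integer $C$ with $\mathrm{span}_\mu(n,\varepsilon)\le C$ for all $n\ge1$. A subset $K\subset X$ is equicontinuous if for every $\varepsilon>0$ there is $\delta>0$ with $d(T^nx,T^ny)<\varepsilon$ for all $n\ge0$ and all $x,y\in K$ with $d(x,y)<\delta$. $T$ is $\mu$-equicontinuous if for every $\tau>0$ there is an equicontinuous measurable $K\subset X$ with $\mu(K)>1-\tau$. *)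

From Stdlib Require Import Reals List.
Open Scope R_scope.

Section Defs.
Variable X : Type.
Variable d : X -> X -> R.

Definition is_metric : Prop :=
  (forall x y, 0 <= d x y) /\
  (forall x y, d x y = 0 <-> x = y) /\
  (forall x y, d x y = d y x) /\
  (forall x y z, d x z <= d x y + d y z).

Definition is_open (U : X -> Prop) : Prop :=
  forall x, U x -> exists r, 0 < r /\ forall y, d x y < r -> U y.

Definition compact_space : Prop :=
  forall (I : Type) (U : I -> X -> Prop),
    (forall i, is_open (U i)) -> (forall x, exists i, U i x) ->
    exists l : list I, forall x, exists i, In i l /\ U i x.

Definition continuous_map (T : X -> X) : Prop :=
  forall x eps, 0 < eps -> exists delta, 0 < delta /\
    forall y, d x y < delta -> d (T x) (T y) < eps.

Inductive borel : (X -> Prop) -> Prop :=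
| borel_open : forall U, is_open U -> borel U
| borel_compl : forall A, borel A -> borel (fun x => ~ A x)
| borel_union : forall A : nat -> X -> Prop, (forall n, borel (A n)) ->
    borel (fun x => exists n, A n x)
| borel_ext : forall A B, borel A -> (forall x, A x <-> B x) -> borel B.

(* mu is a Borel probability measure (its values on non-Borel sets are
   irrelevant and never used) *)
Definition borel_probability (mu : (X -> Prop) -> R) : Prop :=
  (forall A, borel A -> 0 <= mu A) /\
  (forall A B, borel A -> (forall x, A x <-> B x) -> mu A = mu B) /\
  mu (fun _ => True) = 1 /\
  (forall A : nat -> X -> Prop,
     (forall n, borel (A n)) ->
     (forall n m x, n <> m -> A n x -> A m x -> False) ->
     Un_cv (fun N => sum_f_R0 (fun n => mu (A n)) N)
           (mu (fun x => exists n, A n x))).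

Fixpoint iterate (T : X -> X) (n : nat) (x : X) : X :=
  match n with O => x | S k => T (iterate T k x) end.

Definition invariant_measure (T : X -> X) (mu : (X -> Prop) -> R) : Prop :=
  forall A, borel A -> mu (fun x => A (T x)) = mu A.

(* d_n(x,y) = max_{0<=i<=n-1} d(T^i x, T^i y)  (d_0 := 0, only n >= 1 used) *)
Fixpoint dn (T : X -> X) (n : nat) (x y : X) : R :=
  match n with
  | O => 0
  | S k => Rmax (dn T k x y) (d (iterate T k x) (iterate T k y))
  end.

Definition bowen_ball (T : X -> X) (n : nat) (x : X) (eps : R) : X -> Prop :=
  fun y => dn T n x y < eps.

(* span_mu(n,eps) <= C, i.e. some F with #F <= C has
   mu(union_{x in F} B_{d_n}(x,eps)) > 1 - eps *)
Definition span_le (T : X -> X) (mu : (X -> Prop) -> R) (n : nat) (eps : R)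
  (C : nat) : Prop :=
  exists F : list X, (length F <= C)%nat /\
    mu (fun y => exists x, In x F /\ bowen_ball T n x eps y) > 1 - eps.

Definition bounded_complexity (T : X -> X) (mu : (X -> Prop) -> R) : Prop :=
  forall eps, 0 < eps -> exists C : nat, (1 <= C)%nat /\
    forall n, (1 <= n)%nat -> span_le T mu n eps C.

Definition equicontinuous_set (T : X -> X) (K : X -> Prop) : Prop :=
  forall eps, 0 < eps -> exists delta, 0 < delta /\
    forall x y, K x -> K y -> d x y < delta ->
      forall n, d (iterate T n x) (iterate T n y) < eps.

Definition mu_equicontinuous (T : X -> X) (mu : (X -> Prop) -> R) : Prop :=
  forall tau, 0 < tau -> exists K : X -> Prop,
    borel K /\ equicontinuous_set T K /\ mu K > 1 - tau.

End Defs.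

From Pilot Require Import Defs.
From Stdlib Require Import Reals List Lra Lia Classical ClassicalEpsilon.
Open Scope R_scope.

(* If [T] is equicontinuous on a set [K] of measure [> 1 - eps], a finite [delta/2]-net of [X],
   moved into [K], gives centres whose Bowen balls [B_{d_n}(., eps)] cover [K] for every [n]:
   the complexity is bounded.

   Conversely, fix [e] and covers of measure [> 1 - e] by at most [C] Bowen balls
   [B_{d_{n+1}}(u_i(n), e)].  By compactness the [C] centres converge along a common subsequence,
   to [g_i] say; the points covered infinitely often along it form a set of measure [>= 1 - e]
   contained in the union of the closed orbit balls [{y | forall m, d(T^m g_i, T^m y) <= e}].
   These balls are closed, so disjoint ones lie at positive distance, while two points in
   meeting ones stay [4 e]-close along their orbits.  Intersecting such unions over the scales
   [e_k = tau 2^-k / 4] gives an equicontinuous set of measure [>= 1 - tau/2]. *)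

Lemma Un_cv_const (c : R) : Un_cv (fun _ => c) c.
Proof.
  intros eps Heps. exists 0%nat. intros n _.
  unfold Rdist. rewrite Rminus_diag, Rabs_R0. lra.
Qed.

Lemma sum_half_powers_le (N : nat) : sum_f_R0 (fun k => (/ 2) ^ k) N <= 2.
Proof.
  rewrite tech3 by lra.
  pose proof (pow_lt (/ 2) (S N) ltac:(lra)).
  replace ((1 - (/ 2) ^ S N) / (1 - / 2)) with (2 - 2 * (/ 2) ^ S N) by field.
  lra.
Qed.

Lemma half_power_mul_lt (c eps : R) : 0 < c -> 0 < eps -> exists k, (/ 2) ^ k * c < eps.
Proof.
  intros Hc Heps.
  destruct (pow_lt_1_zero (/ 2) ltac:(rewrite Rabs_right; lra) (eps / c)) as [k Hk];
    [apply Rdiv_lt_0_compat; assumption|].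
  exists k. specialize (Hk k (le_n k)). rewrite Rabs_right in Hk by (apply Rle_ge, pow_le; lra).
  apply (Rmult_lt_compat_r c) in Hk; [|exact Hc].
  replace (eps / c * c) with eps in Hk by (field; lra). exact Hk.
Qed.

Lemma list_uniform_pos_bound {I : Type} (l : list I) (Q : I -> R -> Prop) :
  (forall i a b, 0 < b <= a -> Q i a -> Q i b) ->
  (forall i, In i l -> exists a, 0 < a /\ Q i a) ->
  exists a, 0 < a /\ forall i, In i l -> Q i a.
Proof.
  intros Hdown. induction l as [|j l IH]; intros Hex.
  - exists 1. split; [lra | intros i []].
  - destruct IH as [a [Ha HQa]]; [intros i Hi; apply Hex; right; exact Hi|].
    destruct (Hex j (or_introl eq_refl)) as [b [Hb HQb]].
    assert (Hmin : 0 < Rmin a b) by (apply Rmin_glb_lt; assumption).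
    exists (Rmin a b). split; [exact Hmin|].
    intros i [<-|Hi].
    + apply (Hdown _ b); [split; [exact Hmin | apply Rmin_r] | exact HQb].
    + apply (Hdown _ a); [split; [exact Hmin | apply Rmin_l] | apply HQa, Hi].
Qed.

Definition infinite (Q : nat -> Prop) : Prop :=
  forall N, exists n, (N <= n)%nat /\ Q n.

Lemma infinite_pigeonhole (C : nat) (P : nat -> nat -> Prop) :
  infinite (fun n => exists i, (i < C)%nat /\ P i n) ->
  exists i, (i < C)%nat /\ infinite (P i).
Proof.
  induction C as [|C IH]; intros Hinf.
  - destruct (Hinf 0%nat) as [n [_ [i [Hi _]]]]. lia.
  - destruct (classic (infinite (P C))) as [HC|HC].
    { exists C. split; [lia | exact HC]. }
    apply not_all_ex_not in HC. destruct HC as [N0 HN0].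
    destruct IH as [i [Hi HPi]].
    + intros N. destruct (Hinf (Nat.max N N0)) as [n [Hn [i [Hi HP]]]].
      exists n. split; [lia|]. exists i. split; [|exact HP].
      destruct (Nat.eq_dec i C) as [->|]; [|lia].
      exfalso. apply HN0. exists n. split; [lia | exact HP].
    + exists i. split; [lia | exact HPi].
Qed.

Lemma list_choose_witnesses {A B : Type} (Rel : A -> B -> Prop) (l : list A) :
  exists F : list B, (length F <= length l)%nat /\
    forall a, In a l -> (exists b, Rel a b) -> exists b, In b F /\ Rel a b.
Proof.
  induction l as [|a l [F [Hlen HF]]].
  - exists nil. split; [simpl; lia | intros a []].
  - destruct (classic (exists b, Rel a b)) as [[b Hb]|Hnone].
    + exists (b :: F). split; [simpl; lia|].
      intros a' [<-|Ha'] Hex; [exists b; split; [left|]; auto|].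
      destruct (HF a' Ha' Hex) as [b' [Hb' Hrel]]. exists b'. split; [right|]; auto.
    + exists F. split; [simpl; lia|].
      intros a' [<-|Ha'] Hex; [contradiction | exact (HF a' Ha' Hex)].
Qed.

Section Space.
Variables (X : Type) (d : X -> X -> R).
Local Notation borel := (Defs.borel X d).
Local Notation is_open := (Defs.is_open X d).

Lemma borel_empty : borel (fun _ => False).
Proof. apply borel_open. intros x []. Qed.

Lemma borel_full : borel (fun _ => True).
Proof. apply borel_open. intros x _. exists 1. split; [lra | auto]. Qed.

Lemma borel_or (A B : X -> Prop) : borel A -> borel B -> borel (fun x => A x \/ B x).
Proof.
  intros HA HB.
  apply (borel_ext _ _ (fun x => exists n : nat, if Nat.eq_dec n 0 then A x else B x)).
  - apply borel_union. intros n. destruct (Nat.eq_dec n 0); assumption.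
  - intros x. split.
    + intros [n Hn]. destruct (Nat.eq_dec n 0); auto.
    + intros [H|H]; [exists 0%nat | exists 1%nat]; exact H.
Qed.

Lemma borel_and (A B : X -> Prop) : borel A -> borel B -> borel (fun x => A x /\ B x).
Proof.
  intros HA HB. apply (borel_ext _ _ (fun x => ~ (~ A x \/ ~ B x))).
  - apply borel_compl, borel_or; apply borel_compl; assumption.
  - intros x. tauto.
Qed.

Lemma borel_and_prop (P : Prop) (A : X -> Prop) : borel A -> borel (fun x => P /\ A x).
Proof.
  intros HA. destruct (classic P) as [HP|HP].
  - apply (borel_ext _ _ A); [exact HA | tauto].
  - apply (borel_ext _ _ _ _ borel_empty). tauto.
Qed.

Lemma borel_forall_nat (A : nat -> X -> Prop) :
  (forall n, borel (A n)) -> borel (fun x => forall n, A n x).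
Proof.
  intros HA. apply (borel_ext _ _ (fun x => ~ exists n, ~ A n x)).
  - apply borel_compl, borel_union. intros n. apply borel_compl, HA.
  - intros x. split.
    + intros Hx n. apply NNPP. intros Hn. apply Hx. exists n. exact Hn.
    + intros Hx [n Hn]. exact (Hn (Hx n)).
Qed.

Lemma borel_exists_bounded (C : nat) (A : nat -> X -> Prop) :
  (forall i, borel (A i)) -> borel (fun x => exists i, (i < C)%nat /\ A i x).
Proof. intros HA. apply borel_union. intros i. apply borel_and_prop, HA. Qed.

Lemma borel_tail_union (Q : nat -> Prop) (A : nat -> X -> Prop) : (forall n, borel (A n)) ->
  forall N, borel (fun x => exists n, (N <= n)%nat /\ Q n /\ A n x).
Proof. intros HA N. apply borel_union. intros n. apply borel_and_prop, borel_and_prop, HA. Qed.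

Lemma borel_limsup (Q : nat -> Prop) (A : nat -> X -> Prop) : (forall n, borel (A n)) ->
  borel (fun x => forall N, exists n, (N <= n)%nat /\ Q n /\ A n x).
Proof. intros HA. apply borel_forall_nat, borel_tail_union, HA. Qed.

Section Measure.
Context {mu : (X -> Prop) -> R} (Hmu : borel_probability X d mu).

Lemma mu_ext (A B : X -> Prop) : borel A -> (forall x, A x <-> B x) -> mu A = mu B.
Proof. apply Hmu. Qed.

Lemma mu_ge0 (A : X -> Prop) : borel A -> 0 <= mu A.
Proof. apply Hmu. Qed.

Lemma mu_full : mu (fun _ => True) = 1.
Proof. apply Hmu. Qed.

Lemma mu_sigma_additive (A : nat -> X -> Prop) :
  (forall n, borel (A n)) -> (forall n m x, n <> m -> A n x -> A m x -> False) ->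
  Un_cv (fun N => sum_f_R0 (fun n => mu (A n)) N) (mu (fun x => exists n, A n x)).
Proof. apply Hmu. Qed.

Lemma mu_empty : mu (fun _ => False) = 0.
Proof.
  set (m := mu (fun _ => False)).
  set (s := fun N => sum_f_R0 (fun _ : nat => m) N).
  assert (Hs : Un_cv s m).
  { assert (E : mu (fun x => exists _ : nat, False) = m)
      by (apply mu_ext; [apply borel_union; intros; apply borel_empty | firstorder]).
    rewrite <- E.
    exact (mu_sigma_additive (fun _ _ => False) (fun _ => borel_empty) (fun _ _ _ _ H _ => H)). }
  assert (Hshift : Un_cv (fun n => s (n + 1)%nat) (m + m)).
  { apply (Un_cv_ext (fun n => s n + m)); [intros n; rewrite Nat.add_1_r; reflexivity|].
    apply CV_plus; [exact Hs | apply Un_cv_const]. }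
  pose proof (UL_sequence _ _ _ Hshift (CV_shift' s 1 m Hs)). lra.
Qed.

Lemma mu_disjoint_or (A B : X -> Prop) : borel A -> borel B ->
  (forall x, A x -> B x -> False) -> mu (fun x => A x \/ B x) = mu A + mu B.
Proof.
  intros HA HB Hdisj.
  set (F := fun n => match n with 0%nat => A | 1%nat => B | _ => fun _ => False end).
  assert (HF : forall n, borel (F n)) by (intros [|[|n]]; simpl; auto using borel_empty).
  assert (Hcv := mu_sigma_additive F HF).
  assert (Hpartial : forall n, sum_f_R0 (fun k => mu (F k)) (S n) = mu A + mu B).
  { induction n as [|n IH]; [reflexivity|].
    change (sum_f_R0 (fun k => mu (F k)) (S n) + mu (fun _ => False) = mu A + mu B).
    rewrite IH, mu_empty. ring. }
  apply UL_sequence with (fun n => sum_f_R0 (fun k => mu (F k)) (n + 1)).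
  - replace (mu (fun x => A x \/ B x)) with (mu (fun x => exists n, F n x)).
    + apply CV_shift', Hcv.
      intros [|[|n]] [|[|m]] x Hnm; simpl; try tauto; try congruence; eauto.
    + apply mu_ext; [apply borel_union, HF|].
      intros x. split; [intros [[|[|n]] Hx]; simpl in Hx; tauto|].
      intros [Hx|Hx]; [exists 0%nat | exists 1%nat]; exact Hx.
  - apply (Un_cv_ext (fun _ => mu A + mu B)); [|apply Un_cv_const].
    intros n. rewrite Nat.add_1_r. symmetry. apply Hpartial.
Qed.

Lemma mu_le (A B : X -> Prop) : borel A -> borel B -> (forall x, A x -> B x) -> mu A <= mu B.
Proof.
  intros HA HB HAB.
  assert (HBA : borel (fun x => B x /\ ~ A x)) by (apply borel_and, borel_compl; assumption).
  replace (mu B) with (mu (fun x => A x \/ (B x /\ ~ A x))).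
  - rewrite mu_disjoint_or by tauto. pose proof (mu_ge0 _ HBA). lra.
  - apply mu_ext; [apply borel_or; assumption|].
    intros x. split; [intros [H|[H _]]; auto|]. intros H. destruct (classic (A x)); tauto.
Qed.

Lemma mu_not (A : X -> Prop) : borel A -> mu (fun x => ~ A x) = 1 - mu A.
Proof.
  intros HA. rewrite <- mu_full.
  replace (mu (fun _ => True)) with (mu (fun x => A x \/ ~ A x)).
  - rewrite mu_disjoint_or by (auto using borel_compl). ring.
  - apply mu_ext; [apply borel_or; auto using borel_compl|].
    intros x. split; auto. intros _. apply classic.
Qed.

Lemma mu_or_le (A B : X -> Prop) : borel A -> borel B ->
  mu (fun x => A x \/ B x) <= mu A + mu B.
Proof.
  intros HA HB.
  assert (HBA : borel (fun x => B x /\ ~ A x)) by (apply borel_and, borel_compl; assumption).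
  replace (mu (fun x => A x \/ B x)) with (mu (fun x => A x \/ (B x /\ ~ A x))).
  - rewrite mu_disjoint_or by tauto. pose proof (mu_le _ _ HBA HB (fun x H => proj1 H)). lra.
  - apply mu_ext; [apply borel_or; assumption|].
    intros x. split; [tauto|]. intros H. destruct (classic (A x)); tauto.
Qed.

Lemma mu_increasing_union_le (E : nat -> X -> Prop) (c : R) :
  (forall n, borel (E n)) -> (forall n x, E n x -> E (S n) x) -> (forall n, mu (E n) <= c) ->
  mu (fun x => exists n, E n x) <= c.
Proof.
  intros HE Hincr Hc.
  assert (Hmono : forall n m x, (n <= m)%nat -> E n x -> E m x)
    by (intros n m x Hnm; induction Hnm; auto).
  set (P := fun n => match n with 0%nat => E 0%nat | S k => fun x => E (S k) x /\ ~ E k x end).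
  assert (HP : forall n, borel (P n))
    by (intros [|k]; simpl; [apply HE | apply borel_and, borel_compl; apply HE]).
  assert (HPE : forall n x, P n x -> E n x) by (intros [|k] x; simpl; tauto).
  assert (Hdisj : forall n m x, n <> m -> P n x -> P m x -> False).
  { assert (Hlt : forall a b x, (a < b)%nat -> P a x -> P b x -> False).
    { intros a [|b] x Hab Ha Hb; [lia|]. apply (proj2 Hb), (Hmono a); [lia | apply HPE, Ha]. }
    intros n m x Hnm. destruct (Nat.lt_total n m) as [H|[H|H]]; [| lia |]; eauto. }
  assert (Hpartial : forall n, sum_f_R0 (fun k => mu (P k)) n = mu (E n)).
  { induction n as [|n IH]; [reflexivity|]. simpl.
    rewrite IH, <- mu_disjoint_or; [| apply HE | apply (HP (S n)) | simpl; tauto].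
    symmetry. apply mu_ext; [apply HE|].
    intros x. split; [|intros [H|[H _]]; auto]. intros H. destruct (classic (E n x)); tauto. }
  replace (mu (fun x => exists n, E n x)) with (mu (fun x => exists n, P n x)).
  - apply (Rle_cv_lim (fun n => Rle_trans _ _ _ (Req_le _ _ (Hpartial n)) (Hc n))
      (mu_sigma_additive P HP Hdisj) (Un_cv_const c)).
  - apply mu_ext; [apply borel_union, HP|]. intros x. split; [intros [n Hn]; eauto|].
    intros [n Hn]. induction n as [|n IH]; [exists 0%nat; exact Hn|].
    destruct (classic (E n x)) as [H|H]; [apply IH, H | exists (S n); split; assumption].
Qed.

Lemma mu_union_le_sum (W : nat -> X -> Prop) (c : R) :
  (forall n, borel (W n)) -> (forall N, sum_f_R0 (fun k => mu (W k)) N <= c) ->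
  mu (fun x => exists n, W n x) <= c.
Proof.
  intros HW Hc.
  set (E := fun N x => exists k, (k <= N)%nat /\ W k x).
  assert (HE : forall N, borel (E N))
    by (intros N; apply borel_union; intros k; apply borel_and_prop, HW).
  assert (HEsum : forall N, mu (E N) <= sum_f_R0 (fun k => mu (W k)) N).
  { induction N as [|N IH]; simpl.
    - apply Req_le, mu_ext; [apply HE|]. intros x. split; [|intros Hx; exists 0%nat; auto].
      intros [k [Hk Hx]]. replace k with 0%nat in Hx by lia. exact Hx.
    - apply Rle_trans with (mu (fun x => E N x \/ W (S N) x));
        [|pose proof (mu_or_le _ _ (HE N) (HW (S N))); lra].
      apply Req_le, mu_ext; [apply HE|]. intros x. split.
      + intros [k [Hk Hx]]. destruct (Nat.eq_dec k (S N)) as [->|Hne]; [right; exact Hx|].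
        left. exists k. split; [lia | exact Hx].
      + intros [[k [Hk Hx]]|Hx]; [exists k | exists (S N)]; split; auto. }
  replace (mu (fun x => exists n, W n x)) with (mu (fun x => exists N, E N x)).
  - apply mu_increasing_union_le; [exact HE | |].
    + intros N x [k [Hk Hx]]. exists k. split; [lia | exact Hx].
    + intros N. eapply Rle_trans; [apply HEsum | apply Hc].
  - apply mu_ext; [apply borel_union, HE|]. intros x. split.
    + intros [N [k [_ Hx]]]. exists k. exact Hx.
    + intros [n Hx]. exists n, n. split; [lia | exact Hx].
Qed.

Lemma mu_forall_nat (D : nat -> X -> Prop) : (forall n, borel (D n)) ->
  mu (fun x => forall n, D n x) = 1 - mu (fun x => exists n, ~ D n x).
Proof.
  intros HD.
  assert (HnD : borel (fun x => exists n, ~ D n x))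
    by (apply borel_union; intros n; apply borel_compl, HD).
  rewrite <- mu_not by exact HnD. symmetry. apply mu_ext; [apply borel_compl, HnD|].
  intros x. split; [|firstorder]. intros Hx n. apply NNPP. intros Hn. apply Hx. exists n. exact Hn.
Qed.

Lemma mu_forall_nat_ge (U : nat -> X -> Prop) (e : nat -> R) (c : R) :
  (forall k, borel (U k)) -> (forall k, 1 - e k <= mu (U k)) ->
  (forall N, sum_f_R0 e N <= c) -> 1 - c <= mu (fun x => forall k, U k x).
Proof.
  intros HU Hbig Hsum. rewrite mu_forall_nat by exact HU.
  enough (mu (fun x => exists k, ~ U k x) <= c) by lra.
  apply mu_union_le_sum; [intros k; apply borel_compl, HU|].
  intros N. apply Rle_trans with (sum_f_R0 e N); [|apply Hsum].
  apply sum_Rle. intros k _. rewrite mu_not by apply HU. specialize (Hbig k). lra.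
Qed.

Lemma mu_decreasing_inter_ge (D : nat -> X -> Prop) (b : R) :
  (forall n, borel (D n)) -> (forall n x, D (S n) x -> D n x) -> (forall n, b <= mu (D n)) ->
  b <= mu (fun x => forall n, D n x).
Proof.
  intros HD Hdecr Hb. rewrite mu_forall_nat by exact HD.
  enough (mu (fun x => exists n, ~ D n x) <= 1 - b) by lra.
  apply mu_increasing_union_le; [intros n; apply borel_compl, HD | firstorder |].
  intros n. rewrite mu_not by apply HD. specialize (Hb n). lra.
Qed.

Lemma mu_limsup_ge (Q : nat -> Prop) (A : nat -> X -> Prop) (b : R) :
  infinite Q -> (forall n, borel (A n)) -> (forall n, Q n -> b <= mu (A n)) ->
  b <= mu (fun x => forall N, exists n, (N <= n)%nat /\ Q n /\ A n x).
Proof.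
  intros HQ HA Hb. assert (HD := borel_tail_union Q A HA).
  apply mu_decreasing_inter_ge; [exact HD | |].
  - intros N x [n [Hn Hx]]. exists n. split; [lia | exact Hx].
  - intros N. destruct (HQ N) as [n [HNn HQn]].
    apply Rle_trans with (mu (A n)); [apply Hb, HQn|].
    apply mu_le; [apply HA | apply HD |]. intros x Hx. exists n. auto.
Qed.

Lemma probability_inhabited : inhabited X.
Proof.
  apply NNPP. intros Hempty.
  assert (E : mu (fun _ => True) = mu (fun _ => False))
    by (apply mu_ext; [apply borel_full|]; intros x; split; [|tauto];
        intros _; apply Hempty; exact (inhabits x)).
  rewrite mu_full, mu_empty in E. lra.
Qed.
End Measure.

Hypothesis Hd : is_metric X d.

Lemma d_self (x : X) : d x x = 0.
Proof. apply Hd. reflexivity. Qed.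

Lemma d_sym (x y : X) : d x y = d y x.
Proof. apply Hd. Qed.

Lemma d_triangle (x y z : X) : d x z <= d x y + d y z.
Proof. apply Hd. Qed.

Lemma is_open_ball (x : X) (r : R) : is_open (fun y => d x y < r).
Proof.
  intros y Hy. exists (r - d x y). split; [lra|].
  intros z Hz. pose proof (d_triangle x y z). lra.
Qed.

Lemma is_open_exists {I : Type} (U : I -> X -> Prop) :
  (forall i, is_open (U i)) -> is_open (fun y => exists i, U i y).
Proof.
  intros HU y [i Hy]. destruct (HU i y Hy) as [r [Hr Hball]].
  exists r. split; [exact Hr|]. intros z Hz. exists i. apply Hball, Hz.
Qed.

Lemma is_open_and_prop (P : Prop) (U : X -> Prop) : is_open U -> is_open (fun y => P /\ U y).
Proof.
  intros HU y [HP Hy]. destruct (HU y Hy) as [r [Hr Hball]].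
  exists r. split; [exact Hr|]. intros z Hz. split; [exact HP | apply Hball, Hz].
Qed.

Definition is_closed (A : X -> Prop) : Prop := is_open (fun x => ~ A x).

Lemma borel_closed (A : X -> Prop) : is_closed A -> borel A.
Proof.
  intros HA. apply (borel_ext _ _ (fun x => ~ ~ A x)); [apply borel_compl, borel_open, HA|].
  intros x. split; [apply NNPP | tauto].
Qed.

Section Compact.
Hypothesis Hc : compact_space X d.

Lemma finite_ball_cover (r : R) :
  0 < r -> exists l : list X, forall y, exists a, In a l /\ d a y < r.
Proof.
  intros Hr. apply (Hc X (fun a y => d a y < r)); [intros a; apply is_open_ball|].
  intros y. exists y. rewrite d_self. exact Hr.
Qed.

Lemma cluster_point_along (Q : nat -> Prop) (v : nat -> X) : infinite Q ->
  exists x, forall r, 0 < r -> forall N, exists n, (N <= n)%nat /\ Q n /\ d x (v n) < r.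
Proof.
  (* Otherwise every point has a ball that [v] eventually leaves along [Q];
     finitely many of these balls cover [X]. *)
  intros HQ. apply NNPP. intros Hnone.
  set (I := {p : X * R * nat | 0 < snd (fst p) /\
              forall n, (snd p <= n)%nat -> Q n -> snd (fst p) <= d (fst (fst p)) (v n)}).
  destruct (Hc I (fun p y => d (fst (fst (proj1_sig p))) y < snd (fst (proj1_sig p)))) as [l Hl].
  - intros p. apply is_open_ball.
  - intros x. apply NNPP. intros Hx. apply Hnone. exists x. intros r Hr N.
    apply NNPP. intros Hfar. apply Hx.
    assert (Hp : 0 < r /\ forall n, (N <= n)%nat -> Q n -> r <= d x (v n)).
    { split; [exact Hr|]. intros n HNn HQn. apply Rnot_lt_le. intros Hlt. apply Hfar. eauto. }
    exists (exist _ (x, r, N) Hp). simpl. rewrite d_self. exact Hr.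
  - set (M := list_max (map (fun p : I => snd (proj1_sig p)) l)).
    destruct (HQ M) as [n [HMn HQn]]. destruct (Hl (v n)) as [p [Hpl Hp]].
    assert (HpM : (snd (proj1_sig p) <= M)%nat).
    { assert (Hall := proj1 (list_max_le _ M) (le_n M)). rewrite Forall_forall in Hall.
      apply Hall, (in_map (fun p : I => snd (proj1_sig p))), Hpl. }
    pose proof (proj2 (proj2_sig p) n ltac:(lia) HQn). lra.
Qed.

Definition converges_along (Q : nat -> Prop) (v : nat -> X) (x : X) : Prop :=
  forall r, 0 < r -> exists N, forall n, (N <= n)%nat -> Q n -> d x (v n) < r.

Lemma convergent_subsequence (Q : nat -> Prop) (v : nat -> X) : infinite Q ->
  exists Q' x, (forall n, Q' n -> Q n) /\ infinite Q' /\ converges_along Q' v x.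
Proof.
  intros HQ. destruct (cluster_point_along Q v HQ) as [x Hx].
  assert (Hnext : forall k N, {n | (N <= n)%nat /\ Q n /\ d x (v n) < / INR (S k)}).
  { intros k N. apply constructive_indefinite_description, Hx, Rinv_0_lt_compat, lt_0_INR. lia. }
  set (phi := fix phi k := match k with
                           | 0%nat => proj1_sig (Hnext 0%nat 0%nat)
                           | S k => proj1_sig (Hnext (S k) (S (phi k))) end).
  assert (Hphi : forall k, Q (phi k) /\ d x (v (phi k)) < / INR (S k))
    by (intros [|k]; apply (proj2_sig (Hnext _ _))).
  assert (Hphi_step : forall k, (phi k < phi (S k))%nat)
    by (intros k; apply (proj2_sig (Hnext (S k) (S (phi k))))).
  assert (Hphi_mono : forall a b, (a < b)%nat -> (phi a < phi b)%nat).
  { intros a b Hab. induction Hab as [|b Hab IH]; [apply Hphi_step|]. pose proof (Hphi_step b). lia. }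
  assert (Hphi_ge : forall k, (k <= phi k)%nat).
  { induction k as [|k IH]; [lia|]. pose proof (Hphi_step k). lia. }
  exists (fun n => exists k, phi k = n), x. split; [|split].
  - intros n [k <-]. apply Hphi.
  - intros N. exists (phi N). split; [apply Hphi_ge | exists N; reflexivity].
  - intros r Hr. destruct (archimed_cor1 r Hr) as [K [HK HK0]]. exists (phi K).
    intros n HKn [k <-].
    assert (HKk : (K <= k)%nat).
    { destruct (Nat.le_gt_cases K k) as [H|H]; [exact H|]. pose proof (Hphi_mono k K H). lia. }
    apply Rlt_trans with (/ INR (S k)); [apply Hphi|].
    apply Rle_lt_trans with (/ INR K); [|exact HK].
    apply Rinv_le_contravar; [apply lt_0_INR; exact HK0 | apply le_INR; lia].
Qed.

Lemma common_convergent_subsequence (C : nat) (u : nat -> nat -> X) : inhabited X ->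
  exists Q g, infinite Q /\ forall i, (i < C)%nat -> converges_along Q (u i) (g i).
Proof.
  intros [x0]. induction C as [|C IH].
  - exists (fun _ => True), (fun _ => x0). split; [intros N; exists N; auto | intros i Hi; lia].
  - destruct IH as [Q [g [HQ Hg]]].
    destruct (convergent_subsequence Q (u C) HQ) as [Q' [x [HQ'Q [HQ' Hx]]]].
    exists Q', (fun i => if Nat.eq_dec i C then x else g i). split; [exact HQ'|].
    intros i Hi. destruct (Nat.eq_dec i C) as [->|Hne]; [exact Hx|].
    intros r Hr. destruct (Hg i ltac:(lia) r Hr) as [N HN].
    exists N. intros n Hn HQn. apply HN, HQ'Q; assumption.
Qed.

Lemma closed_disjoint_separated (A B : X -> Prop) :
  is_closed A -> is_closed B -> (forall x, A x -> B x -> False) ->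
  exists delta, 0 < delta /\ forall y z, A y -> B z -> delta <= d y z.
Proof.
  (* Cover [X] by the complement of [A] and by balls [B(a, r)] with [B(a, 2 r)] disjoint
     from [B]; the least radius of a finite subcover separates [A] from [B]. *)
  intros HA HB Hdisj.
  set (J := {p : X * R | 0 < snd p /\ forall z, d (fst p) z < 2 * snd p -> ~ B z}).
  set (U := fun (o : option J) y => match o with
                                    | None => ~ A y
                                    | Some p => d (fst (proj1_sig p)) y < snd (proj1_sig p) end).
  destruct (Hc (option J) U) as [l Hl].
  - intros [p|]; [apply is_open_ball | exact HA].
  - intros y. destruct (classic (A y)) as [Hy|Hy]; [|exists None; exact Hy].
    destruct (HB y (Hdisj y Hy)) as [r [Hr Hball]].
    assert (Hp : 0 < snd (y, r / 2) /\
                 forall z, d (fst (y, r / 2)) z < 2 * snd (y, r / 2) -> ~ B z).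
    { simpl. split; [lra|]. intros z Hz. apply Hball. lra. }
    exists (Some (exist _ (y, r / 2) Hp)). simpl. rewrite d_self. lra.
  - destruct (list_uniform_pos_bound l
        (fun o delta => match o with None => True | Some p => delta <= snd (proj1_sig p) end))
      as [delta [Hdelta Hbound]].
    + intros [p|] a b Hab H; [lra | exact I].
    + intros [p|] _; [exists (snd (proj1_sig p)) | exists 1]; split; try lra; auto.
      exact (proj1 (proj2_sig p)).
    + exists delta. split; [exact Hdelta|]. intros y z Hy Hz. apply Rnot_lt_le. intros Hyz.
      destruct (Hl y) as [[p|] [Hin Hu]]; simpl in Hu; [|contradiction].
      specialize (Hbound _ Hin). simpl in Hbound.
      apply (proj2 (proj2_sig p) z); [|exact Hz].
      pose proof (d_triangle (fst (proj1_sig p)) y z). lra.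
Qed.
End Compact.

Section Dynamics.
Variable T : X -> X.
Hypothesis HT : continuous_map X d T.
Local Notation iterate := (Defs.iterate X T).
Local Notation dn := (Defs.dn X d T).
Local Notation bowen_ball := (Defs.bowen_ball X d T).

Lemma iterate_continuous (n : nat) : continuous_map X d (iterate n).
Proof.
  induction n as [|n IH]; intros x eps Heps; simpl.
  - exists eps. split; [exact Heps | auto].
  - destruct (HT (iterate n x) eps Heps) as [e1 [He1 H1]].
    destruct (IH x e1 He1) as [e2 [He2 H2]]. exists e2. split; [exact He2 | auto].
Qed.

Lemma dn_ge_iterate (n m : nat) (x y : X) :
  (m < n)%nat -> d (iterate m x) (iterate m y) <= dn n x y.
Proof.
  induction n as [|n IH]; intros Hmn; [lia|]. simpl.
  destruct (Nat.eq_dec m n) as [->|Hne]; [apply Rmax_r|].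
  apply Rle_trans with (dn n x y); [apply IH; lia | apply Rmax_l].
Qed.

Lemma dn_lt_intro (n : nat) (x y : X) (e : R) : 0 < e ->
  (forall m, (m < n)%nat -> d (iterate m x) (iterate m y) < e) -> dn n x y < e.
Proof.
  intros He. induction n as [|n IH]; intros Hlt; simpl; [exact He|].
  apply Rmax_lub_lt; auto.
Qed.

Lemma is_open_bowen_ball (n : nat) (x : X) (e : R) : is_open (bowen_ball n x e).
Proof.
  unfold bowen_ball. induction n as [|n IH]; simpl.
  - intros y Hy. exists 1. split; [lra | auto].
  - intros y Hy.
    assert (Hprev : dn n x y < e) by (eapply Rle_lt_trans; [apply Rmax_l | exact Hy]).
    assert (Hlast : d (iterate n x) (iterate n y) < e)
      by (eapply Rle_lt_trans; [apply Rmax_r | exact Hy]).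
    destruct (IH y Hprev) as [r1 [Hr1 Hball1]].
    destruct (iterate_continuous n y (e - d (iterate n x) (iterate n y))) as [r2 [Hr2 Hball2]];
      [lra|].
    exists (Rmin r1 r2). split; [apply Rmin_glb_lt; assumption|]. intros z Hz.
    apply Rmax_lub_lt.
    + apply Hball1. eapply Rlt_le_trans; [exact Hz | apply Rmin_l].
    + assert (Hyz : d y z < r2) by (eapply Rlt_le_trans; [exact Hz | apply Rmin_r]).
      specialize (Hball2 z Hyz).
      pose proof (d_triangle (iterate n x) (iterate n y) (iterate n z)). lra.
Qed.

Definition closed_orbit_ball (x : X) (e : R) : X -> Prop :=
  fun y => forall m, d (iterate m x) (iterate m y) <= e.

Lemma is_closed_closed_orbit_ball (x : X) (e : R) : is_closed (closed_orbit_ball x e).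
Proof.
  intros y Hy. apply not_all_ex_not in Hy. destruct Hy as [m Hm]. apply Rnot_le_lt in Hm.
  destruct (iterate_continuous m y (d (iterate m x) (iterate m y) - e)) as [r [Hr Hball]]; [lra|].
  exists r. split; [exact Hr|]. intros z Hz Hclose. specialize (Hclose m). specialize (Hball z Hz).
  pose proof (d_triangle (iterate m x) (iterate m z) (iterate m y)).
  rewrite (d_sym (iterate m z)) in *. lra.
Qed.

Lemma closed_orbit_ball_of_limit (Q : nat -> Prop) (v : nat -> X) (x y : X) (e : R) :
  converges_along Q v x -> infinite (fun n => Q n /\ dn (S n) (v n) y < e) ->
  closed_orbit_ball x e y.
Proof.
  intros Hconv Hinf m. apply Rnot_lt_le. intros Hfar.
  destruct (iterate_continuous m x (d (iterate m x) (iterate m y) - e)) as [r [Hr Hball]]; [lra|].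
  destruct (Hconv r Hr) as [N HN].
  destruct (Hinf (Nat.max N m)) as [n [Hn [HQn Hdn]]].
  specialize (Hball _ (HN n ltac:(lia) HQn)).
  pose proof (dn_ge_iterate (S n) m (v n) y ltac:(lia)).
  pose proof (d_triangle (iterate m x) (iterate m (v n)) (iterate m y)). lra.
Qed.

Definition orbit_ball_cover (C : nat) (g : nat -> X) (e : R) : X -> Prop :=
  fun y => exists i, (i < C)%nat /\ closed_orbit_ball (g i) e y.

Lemma orbits_close_on_cover (C : nat) (g : nat -> X) (e : R) : compact_space X d ->
  exists delta, 0 < delta /\ forall y z,
    orbit_ball_cover C g e y -> orbit_ball_cover C g e z -> d y z < delta ->
    forall n, d (iterate n y) (iterate n z) <= 4 * e.
Proof.
  intros Hc. set (B := fun i => closed_orbit_ball (g i) e).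
  set (disjoint := fun i j => forall w, B i w -> B j w -> False).
  destruct (list_uniform_pos_bound (list_prod (seq 0 C) (seq 0 C))
      (fun ij a => disjoint (fst ij) (snd ij) ->
                   forall y z, B (fst ij) y -> B (snd ij) z -> a <= d y z)) as [delta [Hdelta Hsep]].
  - intros ij a b Hab H Hdisj y z Hy Hz. specialize (H Hdisj y z Hy Hz). lra.
  - intros [i j] _. simpl. destruct (classic (disjoint i j)) as [Hdisj|Hmeet].
    + destruct (closed_disjoint_separated Hc (B i) (B j)) as [a [Ha Hsep]];
        try apply is_closed_closed_orbit_ball; [exact Hdisj|].
      exists a. split; [exact Ha | auto].
    + exists 1. split; [lra | intros Hdisj; contradiction].
  - exists delta. split; [exact Hdelta|]. intros y z [i [Hi Hy]] [j [Hj Hz]] Hyz n.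
    assert (Hij : In (i, j) (list_prod (seq 0 C) (seq 0 C))) by (apply in_prod; apply in_seq; lia).
    destruct (classic (disjoint i j)) as [Hdisj|Hmeet].
    + specialize (Hsep _ Hij Hdisj y z Hy Hz). lra.
    + apply not_all_ex_not in Hmeet. destruct Hmeet as [w Hw].
      apply imply_to_and in Hw. destruct Hw as [Hwi Hw]. apply NNPP in Hw.
      specialize (Hy n). specialize (Hz n). specialize (Hwi n). specialize (Hw n).
      (* y, g i, w, g j, z: four steps of length at most e along the orbit *)
      pose proof (d_triangle (iterate n y) (iterate n (g i)) (iterate n z)).
      pose proof (d_triangle (iterate n (g i)) (iterate n w) (iterate n z)).
      pose proof (d_triangle (iterate n w) (iterate n (g j)) (iterate n z)).
      rewrite (d_sym (iterate n y) (iterate n (g i))), (d_sym (iterate n w) (iterate n (g j))) in *.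
      lra.
Qed.

Lemma equicontinuous_inter_orbit_ball_covers
  (Cs : nat -> nat) (gs : nat -> nat -> X) (e : nat -> R) :
  compact_space X d -> (forall eps, 0 < eps -> exists k, 4 * e k < eps) ->
  equicontinuous_set X d T (fun y => forall k, orbit_ball_cover (Cs k) (gs k) (e k) y).
Proof.
  intros Hc Hscales eps Heps. destruct (Hscales eps Heps) as [k Hk].
  destruct (orbits_close_on_cover (Cs k) (gs k) (e k) Hc) as [delta [Hdelta Hclose]].
  exists delta. split; [exact Hdelta|]. intros y z Hy Hz Hyz n.
  specialize (Hclose y z (Hy k) (Hz k) Hyz n). lra.
Qed.

Section Equivalence.
Hypothesis Hc : compact_space X d.
Context {mu : (X -> Prop) -> R} (Hmu : borel_probability X d mu).

Lemma is_open_bowen_ball_union (n : nat) (F : list X) (e : R) :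
  is_open (fun y => exists x, In x F /\ bowen_ball n x e y).
Proof. apply is_open_exists. intros x. apply is_open_and_prop, is_open_bowen_ball; assumption. Qed.

Lemma mu_equicontinuous_bounded_complexity :
  mu_equicontinuous X d T mu -> bounded_complexity X d T mu.
Proof.
  intros Hequi eps Heps. destruct (Hequi eps Heps) as [K [HK [HKequi HKmu]]].
  destruct (HKequi eps Heps) as [delta [Hdelta Hclose]].
  destruct (finite_ball_cover Hc (delta / 2)) as [l Hl]; [lra|].
  destruct (list_choose_witnesses (fun a k => K k /\ d a k < delta / 2) l) as [F [HFlen HF]].
  exists (S (length l)). split; [lia|]. intros n _. exists F. split; [lia|].
  apply Rlt_le_trans with (mu K); [lra|].
  apply (mu_le Hmu); [exact HK | apply borel_open, is_open_bowen_ball_union |].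
  intros y Hy. destruct (Hl y) as [a [Ha Hay]].
  destruct (HF a Ha) as [k [HkF [HkK Hak]]]; [exists y; split; assumption|].
  exists k. split; [exact HkF|]. apply dn_lt_intro; [exact Heps|].
  intros m _. apply Hclose; [exact HkK | exact Hy |].
  pose proof (d_triangle k a y). rewrite (d_sym k a) in *. lra.
Qed.

Lemma orbit_ball_cover_of_bounded_complexity : bounded_complexity X d T mu ->
  forall e, 0 < e -> exists C g, 1 - e <= mu (orbit_ball_cover C g e).
Proof.
  intros HBC e He. destruct (HBC e He) as [C [_ HC]].
  destruct (probability_inhabited Hmu) as [x0].
  assert (Hcenters : forall n, {F : list X | (length F <= C)%nat /\
             mu (fun y => exists x, In x F /\ bowen_ball (S n) x e y) > 1 - e})
    by (intros n; apply constructive_indefinite_description, HC; lia).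
  set (u := fun i n => nth i (proj1_sig (Hcenters n)) x0).
  set (A := fun n y => exists i, (i < C)%nat /\ dn (S n) (u i n) y < e).
  assert (HA : forall n, is_open (A n)).
  { intros n. apply is_open_exists. intros i. apply is_open_and_prop, is_open_bowen_ball; assumption. }
  assert (HAmu : forall n, 1 - e <= mu (A n)).
  { intros n. destruct (proj2_sig (Hcenters n)) as [Hlen HFmu].
    apply Rlt_le, Rlt_le_trans with (1 := HFmu).
    apply (mu_le Hmu); [apply borel_open, is_open_bowen_ball_union | apply borel_open, HA |].
    intros y [x [Hx Hy]]. destruct (In_nth _ _ x0 Hx) as [i [Hi Hix]].
    exists i. split; [lia|]. unfold u. rewrite Hix. exact Hy. }
  destruct (common_convergent_subsequence Hc C u (inhabits x0)) as [Q [g [HQ Hg]]].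
  exists C, g.
  apply Rle_trans with (mu (fun y => forall N, exists n, (N <= n)%nat /\ Q n /\ A n y)).
  { apply (mu_limsup_ge Hmu); [exact HQ | intros n; apply borel_open, HA | auto]. }
  apply (mu_le Hmu).
  - apply borel_limsup. intros n. apply borel_open, HA.
  - apply borel_exists_bounded. intros i.
    apply borel_closed, is_closed_closed_orbit_ball; assumption.
  - intros y Hy.
    destruct (infinite_pigeonhole C (fun i n => Q n /\ dn (S n) (u i n) y < e)) as [i [Hi Hinf]].
    + intros N. destruct (Hy N) as [n [Hn [HQn [i [Hi Hyi]]]]].
      exists n. split; [exact Hn|]. exists i. auto.
    + exists i. split; [exact Hi|]. apply (closed_orbit_ball_of_limit Q (u i)); auto.
Qed.

Lemma bounded_complexity_mu_equicontinuous :
  bounded_complexity X d T mu -> mu_equicontinuous X d T mu.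
Proof.
  intros HBC tau Htau.
  set (e := fun k : nat => (/ 2) ^ k * (tau / 4)).
  assert (He : forall k, 0 < e k) by (intros k; apply Rmult_lt_0_compat; [apply pow_lt |]; lra).
  assert (Hcovers : forall k, {p : nat * (nat -> X) |
             1 - e k <= mu (orbit_ball_cover (fst p) (snd p) (e k))})
    by (intros k; apply constructive_indefinite_description;
        destruct (orbit_ball_cover_of_bounded_complexity HBC (e k) (He k)) as [C [g H]];
        exists (C, g); exact H).
  set (Cs := fun k => fst (proj1_sig (Hcovers k))).
  set (gs := fun k => snd (proj1_sig (Hcovers k))).
  assert (HU : forall k, borel (orbit_ball_cover (Cs k) (gs k) (e k))).
  { intros k. apply borel_exists_bounded. intros i.
    apply borel_closed, is_closed_closed_orbit_ball; assumption. }
  exists (fun y => forall k, orbit_ball_cover (Cs k) (gs k) (e k) y). split; [|split].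
  - apply borel_forall_nat, HU.
  - apply equicontinuous_inter_orbit_ball_covers; [exact Hc|].
    intros eps Heps. destruct (half_power_mul_lt tau eps Htau Heps) as [k Hk].
    exists k. replace (4 * e k) with ((/ 2) ^ k * tau) by (unfold e; field). exact Hk.
  - apply Rlt_le_trans with (1 - tau / 2); [lra|].
    apply (mu_forall_nat_ge Hmu _ e); [exact HU | intros k; apply (proj2_sig (Hcovers k)) |].
    intros N. unfold e. rewrite <- scal_sum. replace (tau / 2) with (tau / 4 * 2) by field.
    apply Rmult_le_compat_l; [lra | apply sum_half_powers_le].
Qed.
End Equivalence.
End Dynamics.
End Space.

Theorem mainTheorem7 (X : Type) (d : X -> X -> R) (T : X -> X)
  (mu : (X -> Prop) -> R) :
  is_metric X d -> compact_space X d -> continuous_map X d T ->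
  borel_probability X d mu -> invariant_measure X d T mu ->
  (bounded_complexity X d T mu <-> mu_equicontinuous X d T mu).
Proof.
  intros Hd Hc HT Hmu _. split.
  - apply bounded_complexity_mu_equicontinuous; assumption.
  - apply mu_equicontinuous_bounded_complexity; assumption.
Qed.
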